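(* Let $\Psi$ be a finite (possibly empty) composition of the substitutions $U$ and $V$. (i) If $\Psi(ab)=a^{e_1}ba^{e_2}b\cdots a^{e_n}b$ with integers $e_i\ge1$, then for every $i\in\{2,\dots,n\}$, in the lexicographic order, $(e_1,e_2,\dots,e_n,\infty)>(e_i,e_{i+1},\dots,e_n,\infty)$ and $(e_n,e_{n-1},\dots,e_1,\infty)<(e_{n-i+1},e_{n-i},\dots,e_1,\infty)$. (ii) If $\Psi(ab)=ab^{e_1}ab^{e_2}\cdots ab^{e_n}$ with integers $e_i\ge1$, then for every $i\in\{2,\dots,n\}$, in the lexicographic order, $(e_1,e_2,\dots,e_n,1,1,\dots)<(e_i,e_{i+1},\dots,e_n,1,1,\dots)$ and $(e_n,e_{n-1},\dots,e_1,1,1,\dots)>(e_{n-i+1},e_{n-i},\dots,e_1,1,1,\dots)$.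
   Context: Words are finite words in the letters $a,b$. The Nielsen moves are the substitutions $U:a\mapsto ab,\ b\mapsto b$ and $V:a\mapsto a,\ b\mapsto ab$, applied letterwise. Sequences are compared lexicographically, with $\infty$ regarded as larger than every integer; in (ii) the sequences are extended by infinitely many $1$'s. *)

From HB Require Import structures.
From mathcomp Require Import all_boot.
Set Implicit Arguments. Unset Strict Implicit. Unset Printing Implicit Defensive.

Inductive letter := La | Lb.

Definition letter_to_bool (x : letter) : bool := if x is La then true else false.
Definition bool_to_letter (x : bool) : letter := if x then La else Lb.
Lemma letter_boolK : cancel letter_to_bool bool_to_letter.
Proof. by case. Qed.
HB.instance Definition _ := Equality.copy letter (can_type letter_boolK).

Definition word := seq letter.

Inductive move := MU | MV.

Definition img (m : move) (x : letter) : word :=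
  match m, x with
  | MU, La => [:: La; Lb]
  | MU, Lb => [:: Lb]
  | MV, La => [:: La]
  | MV, Lb => [:: La; Lb]
  end.

Definition apply_move (m : move) (w : word) : word := flatten (map (img m) w).

Definition psi (ms : seq move) (w : word) : word := foldr apply_move w ms.

Definition blockA (e : seq nat) : word := flatten [seq rcons (nseq x La) Lb | x <- e].
Definition blockB (e : seq nat) : word := flatten [seq La :: nseq x Lb | x <- e].

(* Extended naturals: None = infinity (larger than every integer). *)
Definition ltx (x y : option nat) : bool :=
  match x, y with
  | Some m, Some n => m < n
  | Some _, None => true
  | None, _ => false
  end.

Fixpoint lexlt (s t : seq (option nat)) : bool :=
  match s, t with
  | [::], [::] => false
  | [::], _ :: _ => true
  | _ :: _, [::] => false
  | x :: s', y :: t' => ltx x y || ((x == y) && lexlt s' t')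
  end.

Definition inf_ext (e : seq nat) : seq (option nat) := rcons (map Some e) None.

Definition pad1 (e : seq nat) : nat -> nat := fun k => nth 1 e k.

Definition lexlt_inf (f g : nat -> nat) : Prop :=
  exists k, (forall j, j < k -> f j = g j) /\ f k < g k.

From mathcomp Require Import all_boot.
From mathcomp Require Import zify.

(* Psi(ab) is a Lyndon word for the order a < b: it is strictly smaller than
   each of its proper suffixes.  Indeed U and V preserve the lexicographic
   order of words, and a proper suffix of the image of a word is either the
   image of a proper suffix or begins with b, while Psi(ab) begins with a.
   Reversing a word and exchanging a and b conjugates U into V, so this
   mirror image of Psi(ab) is again of the form Psi'(ab), hence Lyndon too.
   The suffixes of a^e1 b ... a^en b (resp. a b^e1 ... a b^en) starting at
   block boundaries encode the tails of (e1, ..., en), so comparing blocks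
   turns these Lyndon inequalities into the claimed ones; the mirror image
   exchanges the two block shapes and reverses the exponent sequence. *)

Fixpoint word_lt (u v : word) : bool :=
  match u, v with
  | _, [::] => false
  | [::], _ :: _ => true
  | x :: u', y :: v' =>
      match x, y with
      | La, Lb => true
      | Lb, La => false
      | _, _ => word_lt u' v'
      end
  end.

Lemma word_lt_nil u : word_lt u [::] = false.
Proof. by case: u. Qed.

Lemma word_lt_cat p u v : word_lt (p ++ u) (p ++ v) = word_lt u v.
Proof. by elim: p => [|[] p IH]. Qed.

Definition lyndon (w : word) : Prop :=
  forall i, 0 < i < size w -> word_lt w (drop i w).

Lemma apply_move_cons m c w : apply_move m (c :: w) = img m c ++ apply_move m w.
Proof. by []. Qed.

Lemma apply_move_cat m u v :
  apply_move m (u ++ v) = apply_move m u ++ apply_move m v.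
Proof. by rewrite /apply_move map_cat flatten_cat. Qed.

Lemma apply_move_La m t : exists t', apply_move m (La :: t) = La :: t'.
Proof. by case: m; eexists. Qed.

Lemma word_lt_apply_move m u v :
  word_lt u v -> word_lt (apply_move m u) (apply_move m v).
Proof.
elim: u v => [|x u IH] [|y v] //=; first by rewrite apply_move_cons; case: m; case: y.
rewrite !apply_move_cons; case: x; case: y => //= lt_uv; try by rewrite word_lt_cat IH.
(* the only case where the images do not differ at once: V sends a u and b v
   to a V(u) and a b V(v), and V(u) is empty or begins with a *)
case: m {IH} => //=; case: u {lt_uv} => [|[] u] //.
Qed.

Lemma drop_apply_move m w i :
  (exists j, drop i (apply_move m w) = apply_move m (drop j w)) \/
  (exists s, drop i (apply_move m w) = Lb :: s).
Proof.
elim: w i => [|c w IH] [|i]; try by left; exists 0; rewrite ?drop0.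
rewrite apply_move_cons drop_cat; case: ltnP => [lt_i_img | le_img_i].
  by right; move: lt_i_img {IH}; case: m; case: c; case: i => //; eexists.
have [[j Ej] | ?] := IH (i.+1 - size (img m c)); last by right.
by left; exists j.+1.
Qed.

Lemma lyndon_apply_move m t : lyndon (La :: t) -> lyndon (apply_move m (La :: t)).
Proof.
move=> Lw i lt_i; have [[j Ej] | [s ->]] := drop_apply_move m (La :: t) i.
  have lt_j : 0 < j < size (La :: t).
    case: j Ej => [|j] Ej; first by move: (congr1 size Ej); rewrite drop0 size_drop; lia.
    apply/andP; split => //; rewrite ltnNge; apply/negP => le_size_j.
    by move: (congr1 size Ej); rewrite (drop_oversize le_size_j) size_drop /=; lia.
  by rewrite Ej; apply/word_lt_apply_move/Lw.
by have [t' ->] := apply_move_La m t.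
Qed.

Lemma psi_ab_head ms : exists t, psi ms [:: La; Lb] = La :: t.
Proof.
elim: ms => [|m ms [t IH]]; first by eexists.
by rewrite /= -/(psi ms _) IH; apply: apply_move_La.
Qed.

Lemma lyndon_psi_ab ms : lyndon (psi ms [:: La; Lb]).
Proof.
elim: ms => [|m ms IH]; first by case=> [|[|i]].
have [t Et] := psi_ab_head ms.
by rewrite /= -/(psi ms _) Et; apply: lyndon_apply_move; rewrite -Et.
Qed.

Definition swap (c : letter) : letter := if c is La then Lb else La.

Definition mirror (w : word) : word := map swap (rev w).

Definition mirror_move (m : move) : move := if m is MU then MV else MU.

Lemma swapK : involutive swap.
Proof. by case. Qed.

Lemma mirrorK : involutive mirror.
Proof. by move=> w; rewrite /mirror -map_rev revK (mapK swapK). Qed.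

Lemma mirror_cat u v : mirror (u ++ v) = mirror v ++ mirror u.
Proof. by rewrite /mirror rev_cat map_cat. Qed.

Lemma mirror_apply_move m w :
  mirror (apply_move m w) = apply_move (mirror_move m) (mirror w).
Proof.
elim: w => [|c w IH] //.
rewrite apply_move_cons mirror_cat IH -cat1s mirror_cat apply_move_cat.
by congr (_ ++ _); case: m {IH}; case: c.
Qed.

Lemma mirror_psi_ab ms :
  mirror (psi ms [:: La; Lb]) = psi (map mirror_move ms) [:: La; Lb].
Proof. by elim: ms => [|m ms IH] //=; rewrite mirror_apply_move IH. Qed.

Lemma lyndon_mirror_psi_ab ms : lyndon (mirror (psi ms [:: La; Lb])).
Proof. by rewrite mirror_psi_ab; apply: lyndon_psi_ab. Qed.

Lemma blockA_cons x e : blockA (x :: e) = nseq x La ++ Lb :: blockA e.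
Proof. by rewrite /blockA /= cat_rcons. Qed.

Lemma blockB_cons x e : blockB (x :: e) = La :: nseq x Lb ++ blockB e.
Proof. by []. Qed.

Lemma blockB_rcons e x : blockB (rcons e x) = blockB e ++ La :: nseq x Lb.
Proof. by rewrite /blockB -cats1 map_cat flatten_cat /= cats0. Qed.

Lemma mirror_blockA e : mirror (blockA e) = blockB (rev e).
Proof.
elim: e => [|x e IH] //.
rewrite blockA_cons -cat1s catA mirror_cat IH rev_cons blockB_rcons.
by rewrite mirror_cat /mirror rev_nseq map_nseq.
Qed.

Lemma mirror_blockB e : mirror (blockB e) = blockA (rev e).
Proof. by rewrite -[e]revK -mirror_blockA mirrorK revK. Qed.

Definition mismatch_lt (s t : seq nat) : Prop :=
  exists k, [/\ k < size s, k < size t, take k s = take k t & nth 0 s k < nth 0 t k].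

Lemma mismatch_lt_cons x s t : mismatch_lt s t -> mismatch_lt (x :: s) (x :: t).
Proof. by case=> k [? ? Est ?]; exists k.+1; rewrite /= Est. Qed.

Lemma lexlt_inf_ext s t : mismatch_lt s t -> lexlt (inf_ext s) (inf_ext t).
Proof.
case=> k []; elim: k s t => [|k IH] [|x s] [|y t] //= lt_ks lt_kt.
  by move=> _ ->.
by case=> -> Est lt_st; rewrite eqxx IH ?orbT.
Qed.

Lemma lexlt_inf_pad1 s t : mismatch_lt s t -> lexlt_inf (pad1 s) (pad1 t).
Proof.
case=> k [lt_ks lt_kt Est lt_st]; exists k; split.
  by move=> j lt_jk; rewrite /pad1 -(nth_take 1 lt_jk) Est nth_take.
by rewrite /pad1 (set_nth_default 0 1 lt_ks) (set_nth_default 0 1 lt_kt).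
Qed.

Lemma nseq_ltn_split {T : Type} {m n : nat} (c : T) :
  m < n -> nseq n c = nseq m c ++ c :: nseq (n - m.+1) c.
Proof.
elim: m n => [|m IH] [|n] //= lt_mn; first by rewrite subn1.
by rewrite (IH n).
Qed.

Lemma word_lt_blockA h h' :
  word_lt (blockA h) (blockA h') -> size h' <= size h -> mismatch_lt h' h.
Proof.
elim: h' h => [|x' h' IH] [|x h] //; first by rewrite word_lt_nil.
rewrite !blockA_cons /= => + le_size.
case: (ltngtP x x') => [lt_x | gt_x | <-].
- by rewrite (nseq_ltn_split La lt_x) -catA word_lt_cat.
- by exists 0.
- by rewrite word_lt_cat => lt_w; apply/mismatch_lt_cons/IH.
Qed.

Lemma word_lt_blockB h h' :
  word_lt (blockB h) (blockB h') -> size h' <= size h -> mismatch_lt h h'.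
Proof.
elim: h' h => [|x' h' IH] [|x h] //.
rewrite !blockB_cons /= => + le_size.
case: (ltngtP x x') => [lt_x | gt_x | <-].
- by exists 0.
- by rewrite (nseq_ltn_split Lb gt_x) -catA word_lt_cat; case: h' {IH le_size}.
- by rewrite word_lt_cat => lt_w; apply/mismatch_lt_cons/IH.
Qed.

Section LyndonBlocks.

Variable f : nat -> word.
Hypothesis f_neq0 : forall x, 0 < size (f x).

Lemma size_flatten_map_gt0 s : s != [::] -> 0 < size (flatten (map f s)).
Proof. by case: s => [|x s] //= _; rewrite size_cat ltn_addr. Qed.

Lemma lyndon_flatten_drop h j : lyndon (flatten (map f h)) -> 0 < j < size h ->
  word_lt (flatten (map f h)) (flatten (map f (drop j h))).
Proof.
move=> Lw /andP [gt0_j lt_j].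
have split_w : flatten (map f h) = flatten (map f (take j h)) ++ flatten (map f (drop j h)).
  by rewrite -flatten_cat -map_cat cat_take_drop.
have gt0_take : 0 < size (flatten (map f (take j h))).
  by apply: size_flatten_map_gt0; rewrite -size_eq0 size_take lt_j -lt0n.
have gt0_drop : 0 < size (flatten (map f (drop j h))).
  by apply: size_flatten_map_gt0; rewrite -size_eq0 size_drop subn_eq0 -ltnNge.
have := Lw (size (flatten (map f (take j h)))).
rewrite {2 3}split_w drop_size_cat // -split_w; apply.
by rewrite split_w size_cat gt0_take /=; lia.
Qed.

End LyndonBlocks.

Lemma lyndon_blockA_drop h j : lyndon (blockA h) -> 0 < j < size h ->
  mismatch_lt (drop j h) h.
Proof.
move=> Lw lt_j; apply: word_lt_blockA; last by rewrite size_drop leq_subr.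
by apply: lyndon_flatten_drop => // x; rewrite size_rcons.
Qed.

Lemma lyndon_blockB_drop h j : lyndon (blockB h) -> 0 < j < size h ->
  mismatch_lt h (drop j h).
Proof.
move=> Lw lt_j; apply: word_lt_blockB; last by rewrite size_drop leq_subr.
exact: lyndon_flatten_drop.
Qed.

Theorem lemma4p6 (ms : seq move) :
  (forall e : seq nat, all (fun x => 0 < x) e ->
     psi ms [:: La; Lb] = blockA e ->
     forall i, 2 <= i <= size e ->
       lexlt (inf_ext (drop i.-1 e)) (inf_ext e) /\
       lexlt (inf_ext (rev e)) (inf_ext (drop i.-1 (rev e)))) /\
  (forall e : seq nat, all (fun x => 0 < x) e ->
     psi ms [:: La; Lb] = blockB e ->
     forall i, 2 <= i <= size e ->
       lexlt_inf (pad1 e) (pad1 (drop i.-1 e)) /\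
       lexlt_inf (pad1 (drop i.-1 (rev e))) (pad1 (rev e))).
Proof.
have Lw := lyndon_psi_ab ms; have Lm := lyndon_mirror_psi_ab ms.
split=> e _ Ew i le_i; have lt_j : 0 < i.-1 < size e by lia.
all: rewrite Ew in Lw Lm.
- rewrite mirror_blockA in Lm; split.
    exact/lexlt_inf_ext/lyndon_blockA_drop.
  by apply/lexlt_inf_ext/lyndon_blockB_drop; rewrite ?size_rev.
- rewrite mirror_blockB in Lm; split.
    exact/lexlt_inf_pad1/lyndon_blockB_drop.
  by apply/lexlt_inf_pad1/lyndon_blockA_drop; rewrite ?size_rev.
Qed.
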